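(* For each $n\ge 3$ there is a bounded non-commutative BCK-algebra $\mathcal B$ of order $n$ with $\operatorname{dnd}(\mathcal B)=\frac2n$.
   Context: A BCK-algebra is a set $A$ with a binary operation $\cdot$ and a constant $0$ such that for all $x,y,z\in A$: (BCK1) $((x\cdot y)\cdot(x\cdot z))\cdot(z\cdot y)=0$; (BCK2) $(x\cdot(x\cdot y))\cdot y=0$; (BCK3) $x\cdot x=0$; (BCK4) $0\cdot x=0$; (BCK5) $x\cdot y=0$ and $y\cdot x=0$ imply $x=y$. Define $x\wedge y:=y\cdot(y\cdot x)$; the algebra is commutative if $x\wedge y=y\wedge x$ for all $x,y$. A bounded BCK-algebra has a distinguished element $1$ with $x\cdot 1=0$ for all $x$; $\neg x:=1\cdot x$. For a finite bounded BCK-algebra $\mathcal A$, the double negation degree is $\operatorname{dnd}(\mathcal A)=|\{x\in\mathcal A:\neg\neg x=x\}|/|\mathcal A|$. The order of a finite algebra is its cardinality. *)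

From mathcomp Require Import all_boot all_order all_algebra.
Set Implicit Arguments. Unset Strict Implicit. Unset Printing Implicit Defensive.

Definition is_BCK (T : Type) (op : T -> T -> T) (zero : T) : Prop :=
  [/\ (forall x y z, op (op (op x y) (op x z)) (op z y) = zero),
      (forall x y, op (op x (op x y)) y = zero),
      (forall x, op x x = zero),
      (forall x, op zero x = zero) &
      (forall x y, op x y = zero -> op y x = zero -> x = y)].

Definition bck_meet (T : Type) (op : T -> T -> T) (x y : T) : T := op y (op y x).

Definition is_commutative_BCK (T : Type) (op : T -> T -> T) : Prop :=
  forall x y, bck_meet op x y = bck_meet op y x.

Definition is_bounded_BCK (T : Type) (op : T -> T -> T) (zero one : T) : Prop :=
  is_BCK op zero /\ (forall x, op x one = zero).

Definition bck_neg (T : Type) (op : T -> T -> T) (one x : T) : T := op one x.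

Definition dnd (T : finType) (op : T -> T -> T) (one : T) : rat :=
  (#|[set x : T | bck_neg op one (bck_neg op one x) == x]|%:R / #|T|%:R)%R.

(* On a chain with least element 0, setting x . y := 0 for x <= y and
   x . y := x otherwise gives a BCK-algebra, bounded if the chain has a top 1.
   For 0 < x < y the meets are x /\ y = 0 but y /\ x = x, so the algebra is not
   commutative as soon as the chain has an element strictly between 0 and 1.
   Negation sends 1 to 0 and everything else to 1, so the only fixed points of
   double negation are 0 and 1; on the n-element chain this gives dnd = 2/n. *)

From mathcomp Require Import all_boot all_order all_algebra.
Import Order.TTheory.

Set Implicit Arguments.
Unset Strict Implicit.
Unset Printing Implicit Defensive.

Local Open Scope order_scope.

Section ChainBCK.
Variables (disp : Order.disp_t) (T : orderType disp) (zero : T).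
Hypothesis le0x : forall x, zero <= x.

Definition chain_sub (x y : T) : T := if x <= y then zero else x.

Lemma chain_sub_le (x y : T) : x <= y -> chain_sub x y = zero.
Proof. by rewrite /chain_sub => ->. Qed.

Lemma chain_sub_gt (x y : T) : y < x -> chain_sub x y = x.
Proof. by rewrite /chain_sub leNgt => ->. Qed.

Lemma chain_subxx (x : T) : chain_sub x x = zero.
Proof. exact: chain_sub_le. Qed.

Lemma chain_sub0x (x : T) : chain_sub zero x = zero.
Proof. exact/chain_sub_le/le0x. Qed.

Lemma chain_subx0 (x : T) : chain_sub x zero = x.
Proof. by rewrite /chain_sub; case: ifP => // x_le0; apply/le_anti; rewrite x_le0 le0x. Qed.

Lemma chain_sub_eq0 (x y : T) : (chain_sub x y == zero) = (x <= y).
Proof.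
rewrite /chain_sub; case: leP => [|yx]; rewrite ?eqxx //.
by apply/negbTE; rewrite gt_eqF // (le_lt_trans (le0x y)).
Qed.

Lemma chain_sub_BCK : is_BCK chain_sub zero.
Proof.
split=> [x y z | x y | x | x | x y].
- case: (leP x y) => [xy | yx]; first by rewrite (chain_sub_le xy) !chain_sub0x.
  rewrite (chain_sub_gt yx); case: (leP x z) => [xz | zx].
    have zy : y < z := lt_le_trans yx xz.
    by rewrite (chain_sub_le xz) chain_subx0 (chain_sub_gt zy) (chain_sub_le xz).
  by rewrite (chain_sub_gt zx) chain_subxx chain_sub0x.
- case: (leP x y) => [xy | yx].
    by rewrite (chain_sub_le xy) chain_subx0 (chain_sub_le xy).
  by rewrite (chain_sub_gt yx) chain_subxx chain_sub0x.
- exact: chain_subxx.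
- exact: chain_sub0x.
- move=> /eqP; rewrite chain_sub_eq0 => xy /eqP; rewrite chain_sub_eq0 => yx.
  by apply/le_anti/andP.
Qed.

Lemma chain_sub_meet_lt (x y : T) : x < y -> bck_meet chain_sub x y = zero.
Proof. by move=> xy; rewrite /bck_meet (chain_sub_gt xy) chain_subxx. Qed.

Lemma chain_sub_meet_gt (x y : T) : y < x -> bck_meet chain_sub x y = y.
Proof. by move=> yx; rewrite /bck_meet (chain_sub_le (ltW yx)) chain_subx0. Qed.

Lemma chain_sub_noncommutative (x y : T) :
  zero < x -> x < y -> ~ is_commutative_BCK chain_sub.
Proof.
move=> x_gt0 xy /(_ x y); rewrite chain_sub_meet_lt // chain_sub_meet_gt // => x0.
by rewrite -x0 ltxx in x_gt0.
Qed.

Variable one : T.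
Hypothesis lex1 : forall x, x <= one.

Lemma chain_sub_bounded : is_bounded_BCK chain_sub zero one.
Proof. by split; [exact: chain_sub_BCK | move=> x; exact/chain_sub_le/lex1]. Qed.

Lemma chain_sub_neg (x : T) :
  bck_neg chain_sub one x = if x == one then zero else one.
Proof.
rewrite /bck_neg; case: eqP => [-> | /eqP x_neq1]; first exact: chain_subxx.
by rewrite chain_sub_gt // lt_neqAle x_neq1 lex1.
Qed.

Lemma chain_sub_dneg_id (x : T) :
  (bck_neg chain_sub one (bck_neg chain_sub one x) == x) = (x == zero) || (x == one).
Proof.
rewrite !chain_sub_neg; have [-> | _] := eqVneq x one.
  by rewrite orbT; case: ifP => [/eqP -> | _]; rewrite eqxx.
by rewrite eqxx orbF eq_sym.
Qed.

End ChainBCK.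

Lemma chain_sub_dnd (disp : Order.disp_t) (T : finOrderType disp) (zero one : T) :
  (forall x, x <= one) -> zero != one ->
  dnd (chain_sub zero) one = (2%:R / #|T|%:R)%R.
Proof.
move=> lex1 zero_neq1; rewrite /dnd.
have -> : [set x | bck_neg (chain_sub zero) one (bck_neg (chain_sub zero) one x) == x]
        = [set zero; one].
  by apply/setP => x; rewrite !inE chain_sub_dneg_id.
by rewrite cards2 zero_neq1.
Qed.

Close Scope order_scope.

Theorem theorem4p4 :
  forall n : nat, 3 <= n ->
    exists (T : finType) (op : T -> T -> T) (zero one : T),
      [/\ is_bounded_BCK op zero one,
          ~ is_commutative_BCK op,
          #|T| = n &
          dnd op one = (2%:R / n%:R)%R].
Proof.
case=> [//|m] m_ge2.
have le0x (x : 'I_m.+1) : (ord0 <= x)%O by [].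
have lex1 (x : 'I_m.+1) : (x <= ord_max)%O by exact: leq_ord.
pose mid : 'I_m.+1 := inord 1.
have mid_gt0 : (ord0 < mid)%O by rewrite ltEord /= inordK // ltnW.
have mid_lt1 : (mid < ord_max)%O by rewrite ltEord /= inordK // ltnW.
exists 'I_m.+1, (chain_sub ord0), ord0, ord_max; split.
- exact: chain_sub_bounded.
- exact: chain_sub_noncommutative mid_gt0 mid_lt1.
- exact: card_ord.
- by rewrite chain_sub_dnd ?card_ord // lt_eqF ?(lt_trans mid_gt0).
Qed.
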